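(* Let $N$ be a tree-based network. Then $|Sup(N)|$ equals the number of supporting sets for $\mathcal{J}_N$.
   Context: A phylogenetic network on a nonempty finite set $X$ is a rooted acyclic digraph with no parallel arcs such that: the unique root has out-degree at least one; $X$ is exactly the set of vertices of out-degree zero (leaves), each of in-degree one; every other vertex either has in-degree one and out-degree at least two (a tree vertex) or in-degree at least two and out-degree one (a reticulation). If $|X|=1$, the network may also consist of the single vertex in $X$. An omnian is a non-leaf vertex all of whose children are reticulations. $N$ is tree-based if it has a spanning tree rooted at the root of $N$ all of whose leaves lie in $X$; a support tree for $N$ is such a spanning tree, i.e., a subgraph of $N$ containing all vertices of $N$ that is a directed tree rooted at the root of $N$ whose leaf set is exactly $X$. $Sup(N)$ denotes the set of support trees for $N$ (distinguished by their arc sets). Let $R_t$ be the set of reticulations of $N$ with no reticulation parent, and $Q_t$ the set of vertices of $N$ having a child in $R_t$. $\mathcal{J}_N$ is the bipartite graph with vertex bipartition $\{Q_t,R_t\}$ and an edge $\{q,r\}$ for each arc $(q,r)$ of $N$ with $q\in Q_t$, $r\in R_t$. A supporting set for $\mathcal{J}_N$ is a set $E$ of edges of $\mathcal{J}_N$ such that each omnian in $Q_t$ is incident with at least one edge of $E$ and each vertex of $R_t$ is incident with exactly one edge of $E$. *)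

From mathcomp Require Import all_boot.
Set Implicit Arguments. Unset Strict Implicit. Unset Printing Implicit Defensive.

(* A digraph on a finite vertex type V is given by its arc relation E
   (a relation rules out parallel arcs); rho is the designated root. *)
Section Network.
Variables (V : finType) (E : rel V) (rho : V).

Definition indeg (v : V) : nat := #|[set u | E u v]|.
Definition outdeg (v : V) : nat := #|[set w | E v w]|.

(* leaves = vertices of out-degree zero; X is exactly this set *)
Definition leaf (v : V) : bool := outdeg v == 0.
Definition leafset : {set V} := [set v | leaf v].

Definition reticulation (v : V) : bool := (2 <= indeg v) && (outdeg v == 1).
Definition tree_vertex (v : V) : bool := (indeg v == 1) && (2 <= outdeg v).

Definition acyclic : bool := [forall x, forall y, E x y ==> ~~ connect E y x].

Definition phylo_network : Prop :=
  acyclic /\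
  (forall v, (indeg v == 0) = (v == rho)) /\
  ( (#|V| = 1) \/
    ( 1 <= outdeg rho /\
      forall v, v != rho ->
        [|| (leaf v && (indeg v == 1)), tree_vertex v | reticulation v] )).

Definition omnian (v : V) : bool :=
  ~~ leaf v && [forall w, E v w ==> reticulation w].

Definition Rt : {set V} :=
  [set r | reticulation r && [forall u, E u r ==> ~~ reticulation u]].
Definition Qt : {set V} := [set q | [exists r in Rt, E q r]].

(* edges of the bipartite graph J_N, one per arc (q,r), q in Q_t, r in R_t *)
Definition J_edges : {set V * V} :=
  [set p | [&& E p.1 p.2, p.1 \in Qt & p.2 \in Rt]].

Definition supporting_set (S : {set V * V}) : bool :=
  [&& S \subset J_edges,
      [forall q in Qt, omnian q ==> [exists r, (q, r) \in S]] &
      [forall r in Rt, #|[set q | (q, r) \in S]| == 1]].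

(* Support tree: a set of arcs of N forming (with all vertices of N) a
   directed tree rooted at rho whose leaf set is exactly X. *)
Definition arc_rel (A : {set V * V}) : rel V := fun x y => (x, y) \in A.

Definition support_tree (A : {set V * V}) : bool :=
  [&& [forall p in A, E p.1 p.2],
      [forall v, #|[set u | (u, v) \in A]| == (v != rho)],
      [forall v, connect (arc_rel A) rho v] &
      [forall v, (#|[set w | (v, w) \in A]| == 0) == leaf v]].

Definition Sup : {set {set V * V}} := [set A | support_tree A].

Definition tree_based : Prop := exists A, support_tree A.

End Network.

From mathcomp Require Import all_boot.
Set Implicit Arguments. Unset Strict Implicit. Unset Printing Implicit Defensive.

(* A support tree keeps exactly one incoming arc of every non-root vertex and
   the unique outgoing arc of every reticulation.  So the arc entering a vertex
   outside R_t is forced: a tree vertex or leaf has a single parent, and a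
   reticulation with a reticulation parent must take the outgoing arc of that
   parent.  A support tree is thus determined by its arcs into R_t, and these
   are exactly a supporting set: one parent per vertex of R_t, and an omnian of
   Q_t, which is not a leaf, can keep no arc other than one into R_t, because
   every other child is a reticulation whose entering arc is already forced.
   Conversely, a supporting set completed by the forced arcs is a support tree;
   it is connected from the root because N is acyclic. *)

Lemma connect_root_of_parents (V : finType) (E R : rel V) (rho : V) :
  acyclic E -> subrel R E -> (forall v, v != rho -> exists u, R u v) ->
  forall v, connect R rho v.
Proof.
move=> /forallP acE sRE parent v.
elim: {v}#|[set u | connect E u v]| {-2}v (leqnn #|[set u | connect E u v]|)
  => [|n IHn] v.
  by rewrite leqn0 => /eqP/cards0_eq/setP/(_ v); rewrite !inE connect0.
move=> n_anc; have [->|v_neq_rho] := eqVneq v rho; first exact: connect0.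
have [u Ruv] := parent v v_neq_rho; have Euv := sRE _ _ Ruv.
apply: (connect_trans _ (connect1 Ruv)); apply: IHn.
rewrite -ltnS (leq_trans _ n_anc) // proper_card //; apply/properP; split.
  apply/subsetP=> x; rewrite !inE => /connect_trans; apply; exact: connect1.
exists v; rewrite !inE ?connect0 //.
by have /forallP/(_ v) := acE u; rewrite Euv.
Qed.

Section SupportTrees.

Variables (V : finType) (E : rel V) (rho : V).

Lemma support_tree_arc (A : {set V * V}) u v :
  support_tree E rho A -> (u, v) \in A -> E u v.
Proof. by case/and4P=> /forall_inP /(_ (u, v)). Qed.

Lemma support_tree_parent_unique (A : {set V * V}) u u' v :
  support_tree E rho A -> (u, v) \in A -> (u', v) \in A -> u = u'.
Proof.
case/and4P=> _ /forallP/(_ v)/eqP parents _ _ uvA u'vA.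
by apply: (card_le1_eqP (A := [set u | (u, v) \in A])); rewrite ?inE // parents leq_b1.
Qed.

Lemma support_tree_reticulation_arc (A : {set V * V}) u v :
  support_tree E rho A -> reticulation E u -> E u v -> (u, v) \in A.
Proof.
move=> treeA /andP[_ /eqP out1] Euv.
have /card_gt0P[w] : 0 < #|[set w | (u, w) \in A]|.
  by case/and4P: treeA => _ _ _ /forallP/(_ u); rewrite /leaf out1 lt0n => /eqP->.
rewrite inE => uwA; suff -> : v = w by [].
apply: (card_le1_eqP (A := [set w | E u w])); rewrite ?inE ?(support_tree_arc treeA uwA) //.
by rewrite -/(outdeg E u) out1.
Qed.

Lemma Qt_not_reticulation q : q \in Qt E -> ~~ reticulation E q.
Proof.
by rewrite inE => /existsP[r /andP[]]; rewrite inE => /andP[_ /forallP/(_ q)] /implyP.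
Qed.

Definition forced_arcs : {set V * V} :=
  [set p | [&& E p.1 p.2, p.2 \notin Rt E
              & reticulation E p.2 ==> reticulation E p.1]].

Definition arcs_into_Rt (A : {set V * V}) : {set V * V} :=
  [set p in A | p.2 \in Rt E].

Lemma in_forced_arcs p :
  (p \in forced_arcs) =
  [&& E p.1 p.2, p.2 \notin Rt E & reticulation E p.2 ==> reticulation E p.1].
Proof. exact: in_set. Qed.

Lemma in_arcs_into_Rt A p : (p \in arcs_into_Rt A) = (p \in A) && (p.2 \in Rt E).
Proof. exact: in_set. Qed.

Hypothesis network : phylo_network E rho.

Lemma no_arc_into_root u : E u rho = false.
Proof.
case: network => _ [indeg_root _]; apply/negbTE/negP=> Eu.
move: (indeg_root rho); rewrite eqxx => /eqP/cards0_eq/setP/(_ u).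
by rewrite !inE Eu.
Qed.

Lemma Rt_neq_root r : r \in Rt E -> r != rho.
Proof.
rewrite inE => /andP[/andP[indeg2 _] _]; apply: contraTneq indeg2 => ->.
by case: network => _ [/(_ rho)]; rewrite eqxx => /eqP->.
Qed.

Lemma tree_vertex_or_leaf_indeg v :
  v != rho -> ~~ reticulation E v -> indeg E v = 1.
Proof.
case: network => _ [_ [V1 | [_ types]]] v_neq_rho.
  by move: v_neq_rho; have /card_le1_eqP/(_ v rho isT isT)-> := eq_leq V1; rewrite eqxx.
move: (types v v_neq_rho) => /or3P[/andP[_ /eqP]|/andP[/eqP]|->] //.
Qed.

Lemma support_tree_forced (A : {set V * V}) u v :
  support_tree E rho A -> v \notin Rt E -> ((u, v) \in A) = ((u, v) \in forced_arcs).
Proof.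
move=> treeA v_notRt; rewrite in_forced_arcs /= v_notRt /=.
have [->|v_neq_rho] := eqVneq v rho.
  rewrite no_arc_into_root; apply/negbTE/negP=> /(support_tree_arc treeA).
  by rewrite no_arc_into_root.
case ret_v: (reticulation E v).
  move: v_notRt; rewrite inE ret_v negb_forall => /existsP[w].
  rewrite negb_imply negbK => /andP[Ewv ret_w].
  apply/idP/andP=> [uvA | [Euv ret_u]]; last exact: support_tree_reticulation_arc ret_u Euv.
  have wvA := support_tree_reticulation_arc treeA ret_w Ewv.
  by rewrite (support_tree_parent_unique treeA uvA wvA) Ewv.
rewrite andbT; apply/idP/idP=> [|Euv]; first exact: support_tree_arc.
have [u0 u0vA] : exists u0, (u0, v) \in A.
  case/and4P: treeA => _ /forallP/(_ v) + _ _; rewrite v_neq_rho.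
  by move=> /cards1P[u0 /setP/(_ u0)]; rewrite !inE eqxx; exists u0.
have Eu0v := support_tree_arc treeA u0vA.
have indeg1 := tree_vertex_or_leaf_indeg v_neq_rho (negbT ret_v).
suff -> : u = u0 by [].
by apply: (card_le1_eqP (A := [set u | E u v])); rewrite ?inE // -/(indeg E v) indeg1.
Qed.

Lemma support_tree_split (A : {set V * V}) :
  support_tree E rho A -> A = arcs_into_Rt A :|: forced_arcs.
Proof.
move=> treeA; apply/setP=> [[u v]]; rewrite in_setU in_arcs_into_Rt /=.
case: (boolP (v \in Rt E)) => [v_Rt | v_notRt].
  by rewrite andbT in_forced_arcs /= v_Rt andbF orbF.
by rewrite andbF (support_tree_forced _ treeA v_notRt).
Qed.

Lemma supporting_set_arcs_into_Rt (A : {set V * V}) :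
  support_tree E rho A -> supporting_set E (arcs_into_Rt A).
Proof.
move=> treeA; apply/and3P; split.
- apply/subsetP=> [[q r]]; rewrite in_arcs_into_Rt => /andP[qrA r_Rt].
  have Eqr := support_tree_arc treeA qrA.
  by rewrite in_set /= Eqr r_Rt andbT in_set; apply/existsP; exists r; rewrite r_Rt.
- apply/forall_inP=> q q_Qt; apply/implyP=> /andP[q_nonleaf /forallP out_ret].
  have /card_gt0P[w] : 0 < #|[set w | (q, w) \in A]|.
    by case/and4P: treeA => _ _ _ /forallP/(_ q); rewrite (negbTE q_nonleaf) lt0n => /eqP->.
  rewrite inE => qwA; have Eqw := support_tree_arc treeA qwA.
  apply/existsP; exists w; rewrite in_arcs_into_Rt qwA /=.
  apply: contraT => w_notRt; move: qwA.
  rewrite (support_tree_forced _ treeA w_notRt) in_forced_arcs /= (implyP (out_ret w) Eqw).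
  by case/and3P=> _ _ /= ret_q; move: (Qt_not_reticulation q_Qt); rewrite ret_q.
- apply/forall_inP=> r r_Rt.
  rewrite (@eq_finset _ _ (fun q => (q, r) \in A)); last first.
    by move=> q; rewrite in_arcs_into_Rt r_Rt andbT.
  by case/and4P: treeA => _ /forallP/(_ r); rewrite (Rt_neq_root r_Rt).
Qed.

Lemma supporting_set_arc S p :
  supporting_set E S -> p \in S -> E p.1 p.2 && (p.2 \in Rt E).
Proof. by case/and3P=> /subsetP sub _ _ /sub; rewrite in_set => /and3P[-> _ ->]. Qed.

Lemma arcs_into_Rt_completion S :
  supporting_set E S -> arcs_into_Rt (S :|: forced_arcs) = S.
Proof.
move=> suppS; apply/setP=> [[u v]]; rewrite in_arcs_into_Rt in_setU in_forced_arcs /=.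
case: (boolP (v \in Rt E)) => [v_Rt | v_notRt]; first by rewrite andbF orbF andbT.
rewrite andbF; apply/esym/negbTE; apply: contra v_notRt => /(supporting_set_arc suppS).
by case/andP.
Qed.

Variables (A0 S : {set V * V}).
Hypotheses (treeA0 : support_tree E rho A0) (suppS : supporting_set E S).

Let T := S :|: forced_arcs.

Lemma completion_arc p : p \in T -> E p.1 p.2.
Proof.
by rewrite in_setU in_forced_arcs => /orP[/(supporting_set_arc suppS)/andP[] | /and3P[]].
Qed.

Lemma completion_parents v : #|[set u | (u, v) \in T]| == (v != rho).
Proof.
case: (boolP (v \in Rt E)) => [v_Rt | v_notRt].
  rewrite (Rt_neq_root v_Rt) (@eq_finset _ _ (fun u => (u, v) \in S)); last first.
    by move=> u; rewrite in_setU in_forced_arcs /= v_Rt andbF orbF.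
  by case/and3P: suppS => _ _ /forall_inP/(_ v v_Rt).
rewrite (@eq_finset _ _ (fun u => (u, v) \in A0)); last first.
  move=> u; rewrite /= in_setU -(support_tree_forced _ treeA0 v_notRt) orb_idl //.
  by move/(supporting_set_arc suppS)/andP=> [_ /= v_Rt]; rewrite v_Rt in v_notRt.
by case/and4P: treeA0 => _ /forallP/(_ v).
Qed.

Lemma completion_leaf v : (#|[set w | (v, w) \in T]| == 0) == leaf E v.
Proof.
case: (boolP (leaf E v)) => [leaf_v | nonleaf_v].
  rewrite eqb_id cards_eq0; apply/eqP/setP=> w; rewrite in_set in_set0.
  apply: contraTF leaf_v => /completion_arc Evw.
  by rewrite /leaf /outdeg -lt0n; apply/card_gt0P; exists w; rewrite inE.
rewrite eqbF_neg cards_eq0; apply/set0Pn.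
have /card_gt0P[w] : 0 < #|[set w | (v, w) \in A0]|.
  by case/and4P: treeA0 => _ _ _ /forallP/(_ v); rewrite (negbTE nonleaf_v) lt0n => /eqP->.
rewrite inE => vwA0; have Evw := support_tree_arc treeA0 vwA0.
case: (boolP (w \in Rt E)) => [w_Rt | w_notRt]; last first.
  by exists w; rewrite in_set in_setU -(support_tree_forced _ treeA0 w_notRt) vwA0 orbT.
have v_Qt : v \in Qt E by rewrite inE; apply/existsP; exists w; rewrite w_Rt.
case: (boolP (omnian E v)) => [omn_v | ].
  case/and3P: suppS => _ /forall_inP/(_ v v_Qt) + _; rewrite omn_v => /existsP[r vrS].
  by exists r; rewrite in_set in_setU vrS.
rewrite /omnian nonleaf_v negb_forall => /existsP[w']; rewrite negb_imply => /andP[Evw' ret_w'].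
exists w'; rewrite in_set in_setU in_forced_arcs /= Evw' (negbTE ret_w') andbT /=.
by apply/orP; right; apply: contra ret_w'; rewrite inE => /andP[].
Qed.

Lemma support_tree_completion : support_tree E rho T.
Proof.
apply/and4P; split.
- by apply/forall_inP=> p /completion_arc.
- by apply/forallP=> v; apply: completion_parents.
- apply/forallP; apply: (@connect_root_of_parents _ E); first by case: network.
    by move=> u v /completion_arc.
  move=> v v_neq_rho; have := completion_parents v; rewrite v_neq_rho.
  by move=> /cards1P[u /setP/(_ u)]; rewrite in_set set11 => uvT; exists u.
- by apply/forallP=> v; apply: completion_leaf.
Qed.

End SupportTrees.

Theorem corollary1 (V : finType) (E : rel V) (rho : V) :
  phylo_network E rho ->
  tree_based E rho ->
  #|Sup E rho| = #|[set S : {set V * V} | supporting_set E S]|.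
Proof.
move=> network [A0 treeA0].
have inj : {in Sup E rho &, injective (arcs_into_Rt E)}.
  move=> A B; rewrite !inE => treeA treeB eqAB.
  by rewrite (support_tree_split network treeA) (support_tree_split network treeB) eqAB.
rewrite -(card_in_imset inj); congr #|pred_of_set _|; apply/setP=> S; rewrite inE.
apply/imsetP/idP=> [[A] | suppS].
  by rewrite inE => treeA ->; exact: (supporting_set_arcs_into_Rt network treeA).
exists (S :|: forced_arcs E); last by rewrite arcs_into_Rt_completion.
by rewrite inE; exact: (support_tree_completion network treeA0 suppS).
Qed.
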